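(* Let $C$ be an extended ADE curve, $\chi>0$ an integer, and $H$ an ample line bundle on $C$ with $\sum_{o\in O}b_o=\chi+|O|-1$. Then: (i) $b_i=1$ for every $i\in I$. (ii) Let $J\subset O$ and let $f$ be a number with $0\le f\le e_I:=\sum_{i\in I}m_ie_i$, and assume that $J\subsetneq O$ or $f<e_I$. Then \[1-|J|+\sum_{j\in J}b_j>\frac{f+\sum_{j\in J}e_j}{e}\,\chi.\]
   Context: Work over $\mathbb C$. Let $X$ be a smooth projective surface and $C=\sum_{v\in V}m_vC_v\subset X$ an effective divisor with smooth irreducible components $C_v$, at most two through any point, meeting transversally. The labelled intersection graph $\Gamma$ has vertex set $V$, one edge per intersection point, label $m_v$. $C$ is an \emph{extended ADE curve} if (1) $\Gamma$ is one of: $\tilde A_n$: a cycle of $n+1$ vertices (two vertices, two edges if $n=1$), all labels $1$; $\tilde D_n$ ($n\ge4$): a chain of $n-3$ label-$2$ vertices with two label-$1$ vertices attached to each end (for $n=4$, one label-$2$ vertex with four label-$1$ neighbours); $\tilde E_6$: central label-$3$ vertex with three arms (label $2$ then $1$); $\tilde E_7$: chain $1,2,3,4,3,2,1$ plus a label-$2$ vertex on the label-$4$ vertex; $\tilde E_8$: chain $2,4,6,5,4,3,2,1$ plus a label-$3$ vertex on the label-$6$ vertex; (2) each $C_i$ with $m_i\ge2$ is a smooth rational $(-2)$-curve. $O$ = vertices of label $1$, $I=V\setminus O$. $e_v=\deg(H|_{C_v})$, $e=\sum_vm_ve_v$, $b_v=\lceil e_v\chi/e\rceil$. *)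

From HB Require Import structures.
From mathcomp Require Import all_boot all_order all_algebra.
Set Implicit Arguments. Unset Strict Implicit. Unset Printing Implicit Defensive.
Import Order.TTheory GRing.Theory Num.Theory.

(* Types of extended ADE (affine Dynkin) labelled graphs.
   ADE_At n = \tilde A_n (n >= 1), ADE_Dt n = \tilde D_n (n >= 4). *)
Inductive ADEtype := ADE_At of nat | ADE_Dt of nat | ADE_E6 | ADE_E7 | ADE_E8.

Definition ADE_wf (T : ADEtype) : bool :=
  match T with
  | ADE_At n => 1 <= n
  | ADE_Dt n => 4 <= n
  | _ => true
  end.

Definition ADE_labels (T : ADEtype) : seq nat :=
  match T with
  | ADE_At n => nseq n.+1 1
  | ADE_Dt n => [:: 1; 1] ++ nseq (n - 3) 2 ++ [:: 1; 1]
  | ADE_E6 => [:: 3; 2; 2; 2; 1; 1; 1]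
  | ADE_E7 => [:: 1; 2; 3; 4; 3; 2; 1; 2]
  | ADE_E8 => [:: 2; 4; 6; 5; 4; 3; 2; 1; 3]
  end.

(* The edges of the graph (one per intersection point), for documentation;
   the numerical statement only depends on the labels. *)
Definition ADE_edges (T : ADEtype) : seq (nat * nat) :=
  match T with
  | ADE_At 1 => [:: (0, 1); (0, 1)]
  | ADE_At n => [seq (i, (i.+1 %% n.+1)) | i <- iota 0 n.+1]
  | ADE_Dt 4 => [:: (2, 0); (2, 1); (2, 3); (2, 4)]
  | ADE_Dt n => [:: (0, 2); (1, 2)] ++ [seq (i, i.+1) | i <- iota 2 (n - 4)]
                 ++ [:: (n - 2, n - 1); (n - 2, n)]
  | ADE_E6 => [:: (0, 1); (0, 2); (0, 3); (1, 4); (2, 5); (3, 6)]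
  | ADE_E7 => [:: (0, 1); (1, 2); (2, 3); (3, 4); (4, 5); (5, 6); (3, 7)]
  | ADE_E8 => [:: (0, 1); (1, 2); (2, 3); (3, 4); (4, 5); (5, 6); (6, 7); (2, 8)]
  end.

Definition ADEvert (T : ADEtype) := 'I_(size (ADE_labels T)).

Definition mlab (T : ADEtype) (v : ADEvert T) : nat := nth 0 (ADE_labels T) v.

Definition Overt (T : ADEtype) : {set ADEvert T} := [set v | mlab v == 1].
Definition Ivert (T : ADEtype) : {set ADEvert T} := ~: Overt T.

Definition etot (T : ADEtype) (e : ADEvert T -> nat) : nat :=
  \sum_(v : ADEvert T) mlab v * e v.

Definition eI (T : ADEtype) (e : ADEvert T -> nat) : nat :=
  \sum_(i in Ivert T) mlab i * e i.

Definition bval (T : ADEtype) (e : ADEvert T -> nat) (chi : nat) (v : ADEvert T) : int :=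
  Num.ceil (((e v * chi)%:R : rat) / (etot e)%:R).

From HB Require Import structures.
From mathcomp Require Import all_boot all_order all_algebra zify lra.
Import Order.TTheory GRing.Theory Num.Theory.
Set Implicit Arguments. Unset Strict Implicit.
Local Open Scope ring_scope.

(* Since b_v is a ceiling, (b_v - 1) e < e_v chi for every vertex. Summed over
   O \ J and combined with the hypothesis on the sum of the b_o and with
   e = sum_O e_o + e_I, this gives the integer inequality
   (e_I + e_J) chi + |O \ J| <= (1 - |J| + sum_J b_j) e.
   For J empty it says chi e_I + |O| <= e, so 0 < e_i chi / e < 1 for i in I,
   which is (i); for general J it is (ii) with f = e_I, and the extra term
   |O \ J| is what makes the inequality strict when J is a proper subset. *)

Lemma ceil_divn_lt (F : archiRealFieldType) (a n : nat) : (0 < n)%N ->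
  (Num.ceil (a%:R / n%:R : F) - 1) * n%:Z < a%:Z.
Proof.
move=> n_gt0; rewrite -(ltr_int F) intrM -!natz !mulrz_nat.
by rewrite -ltr_pdivlMr ?ltr0n ?ceilB1_lt.
Qed.

Section ExtendedADE.

Variables (T : ADEtype) (e : ADEvert T -> nat).
Hypothesis e_gt0 : forall v, (0 < e v)%N.

Lemma mlab_gt0 (v : ADEvert T) : (0 < mlab v)%N.
Proof.
have labels_gt0 : all (leq 1) (ADE_labels T).
  by case: T => [n|n|||] //=; rewrite ?all_cat ?all_nseq ?orbT.
by apply: (all_nthP 0 labels_gt0); case: v.
Qed.

Lemma Overt_neq0 : Overt T != set0.
Proof.
have one_label : 1%N \in ADE_labels T by case: T => [n|n|||] //=; rewrite mem_nseq.
apply/set0Pn; exists (Ordinal (etrans (index_mem _ _) one_label)).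
by rewrite inE /mlab nth_index.
Qed.

Lemma etot_split : etot e = (\sum_(o in Overt T) e o + eI e)%N.
Proof.
rewrite /etot /eI (bigID (mem (Overt T))) /=; congr (_ + _)%N.
  by apply: eq_bigr => o; rewrite inE => /eqP ->; rewrite mul1n.
by apply: eq_bigl => v; rewrite in_setC.
Qed.

Lemma etot_gt0 : (0 < etot e)%N.
Proof.
have [o Oo] := set0Pn _ Overt_neq0.
by rewrite etot_split (bigD1 o) //= addnAC ltn_addr ?ltn_addr.
Qed.

Lemma e_le_eI i : i \in Ivert T -> (e i <= eI e)%N.
Proof.
move=> Ii; rewrite /eI (bigD1 i) //= (leq_trans _ (leq_addr _ _)) //.
by rewrite leq_pmull ?mlab_gt0.
Qed.

Variable chi : nat.

Lemma sum_bval_bound (A : {set ADEvert T}) :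
  (\sum_(v in A) bval e chi v - #|A|%:Z) * (etot e)%:Z + #|A|%:Z
    <= ((\sum_(v in A) e v) * chi)%N%:Z.
Proof.
have bval_le v : (bval e chi v - 1) * (etot e)%:Z + 1 <= (e v * chi)%N%:Z.
  by rewrite lezD1; apply: ceil_divn_lt etot_gt0.
have := @ler_sum _ _ (index_enum _) (mem A) _ _ (fun v _ => bval_le v).
rewrite big_split /= -mulr_suml sumrB !sumr_const -[#|A|%:Z]natz.
by rewrite big_distrl /= -(big_morph Posz PoszD (erefl 0%Z)).
Qed.

Hypothesis sum_bval_Overt :
  \sum_(o in Overt T) bval e chi o = chi%:Z + #|Overt T|%:Z - 1.

Lemma bval_Overt_bound (J : {set ADEvert T}) : J \subset Overt T ->
  ((eI e + \sum_(j in J) e j) * chi + #|Overt T :\: J|)%N%:Z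
    <= (1 - #|J|%:Z + \sum_(j in J) bval e chi j) * (etot e)%:Z.
Proof.
move=> JO; have := sum_bval_bound (Overt T :\: J).
have splitO (F : ADEvert T -> int) : \sum_(o in Overt T) F o
    = \sum_(j in J) F j + \sum_(o in Overt T :\: J) F o.
  by rewrite (big_setID J) (setIidPr JO).
have := cardsID J (Overt T); rewrite (setIidPr JO).
have := splitO (fun o => (e o)%:Z); have := splitO (bval e chi).
rewrite sum_bval_Overt -!(big_morph Posz PoszD (erefl 0%Z)) etot_split.
set bJ := \sum_(j in J) _; set bOJ := \sum_(o in _ :\: J) _.
set eJ := (\sum_(j in J) _)%N; set eOJ := (\sum_(o in _ :\: J) _)%N.
set eO := (\sum_(o in _) _)%N.
nia.
Qed.

Lemma eI_chi_bound : (eI e * chi + #|Overt T| <= etot e)%N.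
Proof.
have := bval_Overt_bound (sub0set (Overt T)).
by rewrite big_set0 cards0 setD0 !big_set0 addn0 subr0 addr0 mul1r.
Qed.

Hypothesis chi_gt0 : (0 < chi)%N.

Lemma bval_Ivert i : i \in Ivert T -> bval e chi i = 1.
Proof.
move=> Ii; apply: ceil_def.
rewrite subrr divr_gt0 ?ltr0n ?muln_gt0 ?e_gt0 ?etot_gt0 //=.
rewrite ler_pdivrMr ?ltr0n ?etot_gt0 // mul1r ler_nat.
apply: leq_trans (leq_trans (leq_addr _ _) eI_chi_bound).
by rewrite leq_mul2r e_le_eI ?orbT.
Qed.

End ExtendedADE.

Theorem lemma3p13 (R : realFieldType) (T : ADEtype) (HT : ADE_wf T)
  (e : ADEvert T -> nat) (He : forall v, (0 < e v)%N)
  (chi : nat) (Hchi : (0 < chi)%N)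
  (Hsum : \sum_(o in Overt T) bval e chi o = (chi%:Z + #|Overt T|%:Z - 1)) :
  (forall i, i \in Ivert T -> bval e chi i = 1) /\
  (forall (J : {set ADEvert T}) (f : R),
     J \subset Overt T -> 0 <= f -> f <= (eI e)%:R ->
     (J \proper Overt T \/ f < (eI e)%:R) ->
     (1 - (#|J|%:Z)%:~R + \sum_(j in J) (bval e chi j)%:~R : R)
       > (f + \sum_(j in J) (e j)%:R) / (etot e)%:R * chi%:R).
Proof.
split=> [|J f JO _ f_le strict]; first by move=> i; apply: bval_Ivert.
rewrite mulrAC ltr_pdivrMr ?ltr0n ?(etot_gt0 He) // -natr_sum -!pmulrn.
have := bval_Overt_bound He Hsum JO; rewrite -(ler_int R) intrM intrD intrB.
rewrite -!pmulrn natrD natrM natrD [in X in _ <= X]rmorph_sum => bound.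
apply: lt_le_trans bound.
have chi_gt0 : (0 : R) < chi%:R by rewrite ltr0n.
case: strict => [JO_proper|f_lt].
  have : f * chi%:R <= (eI e)%:R * chi%:R by rewrite ler_wpM2r ?ler0n.
  have : (0 : R) < #|Overt T :\: J|%:R.
    by rewrite ltr0n card_gt0 setD_eq0; case/andP: JO_proper.
  lra.
have : f * chi%:R < (eI e)%:R * chi%:R by rewrite ltr_pM2r.
have := ler0n R #|Overt T :\: J|; lra.
Qed.
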